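(* Let $K$ be a Barański sponge in $\mathbb R^d$ with associated sets $Q_n$. Then $K$ is connected if and only if $Q_{d+1}$ is connected.
   Context: Let $d\ge2$ and integers $N_1,\dots,N_d\ge2$. For each $1\le i\le d$ let $(p_{i,1},\dots,p_{i,N_i})$ be a probability vector (positive entries summing to 1), and set $q_{i,1}=0$, $q_{i,j}=\sum_{\ell<j}p_{i,\ell}$. Let $\mathcal D\subset\{(j_1,\dots,j_d):1\le j_i\le N_i\}$ with $1<|\mathcal D|<\prod_iN_i$. For $w=(j_1,\dots,j_d)\in\mathcal D$ define $\psi_w(x_1,\dots,x_d)=(p_{1,j_1}x_1+q_{1,j_1},\dots,p_{d,j_d}x_d+q_{d,j_d})$. The Barański sponge $K$ is the unique nonempty compact set with $K=\bigcup_{w\in\mathcal D}\psi_w(K)$. Set $Q_0=[0,1]^d$ and $Q_n=\bigcup_{w\in\mathcal D}\psi_w(Q_{n-1})$ for $n\ge1$. *)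

From HB Require Import structures.
From mathcomp Require Import all_boot all_order all_algebra.
From mathcomp Require Import all_classical all_reals all_analysis.
Set Implicit Arguments. Unset Strict Implicit. Unset Printing Implicit Defensive.
Import Order.TTheory GRing.Theory Num.Theory.
Import numFieldNormedType.Exports.
Local Open Scope classical_set_scope.
Local Open Scope ring_scope.

(* Digits are 0-indexed: j ranges over 0 <= j < N i (paper: 1 <= j <= N_i).
   Points of R^d are row vectors 'rV[R]_d (product topology). *)

Definition bq (R : realType) (d : nat) (p : 'I_d -> nat -> R) (i : 'I_d) (j : nat) : R :=
  \sum_(l < j) p i l.

Definition bpsi (R : realType) (d : nat) (p : 'I_d -> nat -> R)
  (w : {ffun 'I_d -> nat}) (x : 'rV[R]_d) : 'rV[R]_d :=
  \row_(i < d) (p i (w i) * x ord0 i + bq p i (w i)).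

Definition unit_cube (R : realType) (d : nat) : set 'rV[R]_d :=
  [set x | forall i : 'I_d, 0 <= x ord0 i <= 1].

Fixpoint bQ (R : realType) (d : nat) (p : 'I_d -> nat -> R)
  (D : seq {ffun 'I_d -> nat}) (n : nat) : set 'rV[R]_d :=
  match n with
  | 0 => @unit_cube R d
  | n'.+1 => \bigcup_(w in [set` D]) (bpsi p w @` bQ p D n')
  end.

(* By Hata's criterion, the attractor K of the maps psi_w, w in D, is connected
   as soon as the graph on D linking u and v whenever psi_u(K) and psi_v(K) meet
   is connected; the same graph makes every Q_n a connected union of connected
   pieces, while conversely a connected finite union of closed pieces always has
   a connected intersection graph.  So everything reduces to: if psi_u(Q_d) and
   psi_v(Q_d) meet, then so do psi_u(K) and psi_v(K).
   A contact psi_a(x) = psi_b(y) of two boxes forces x and y onto faces of the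
   unit cube: every coordinate where the digits of a and b differ gets pinned.
   Following such a contact of faces one level down, the digits either differ
   in a still free coordinate, which then gets pinned too, or agree in all of
   them, and then the fixed points of psi_a and psi_b, which lie in K, witness
   the contact.  Since at most d coordinates can be pinned, a contact in Q_d
   between two distinct pieces lifts to K. *)

From HB Require Import structures.
From mathcomp Require Import all_boot all_order all_algebra.
From mathcomp Require Import all_classical all_reals all_analysis.
From mathcomp Require Import ring lra.
Import Order.TTheory GRing.Theory Num.Theory.
Import numFieldNormedType.Exports.
Local Open Scope classical_set_scope.
Local Open Scope ring_scope.
Set Implicit Arguments. Unset Strict Implicit. Unset Printing Implicit Defensive.

Lemma exists_expr_lt (R : realType) (c e : R) : 0 <= c < 1 -> 0 < e ->
  exists n, c ^+ n < e.
Proof.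
move=> /andP[c0 c1] e0; have : `|c| < 1 by rewrite ger0_norm.
move/cvg_expr/cvgr0Pnorm_lt => /(_ e e0) [n _ Hn].
by exists n; have := Hn n (leqnn n); rewrite /= ger0_norm // exprn_ge0.
Qed.

Lemma closed_geometric_approx (R : realType) (T : pseudoMetricType R)
    (A : set T) x (c M : R) : closed A -> 0 <= c < 1 -> 0 < M ->
  (forall n, exists2 z, A z & ball x (c ^+ n * M) z) -> A x.
Proof.
move=> cA c01 M0 near; rewrite ((closure_id A).1 cA) => B /nbhs_ballP[e e0 eB].
have [n n_lt] := exists_expr_lt c01 (divr_gt0 e0 M0).
have [z Az xz] := near n; exists z; split => //; apply/eB/(le_ball _ xz).
by rewrite ltW // -ltr_pdivlMr.
Qed.

Lemma clopen_uniformly_constant (R : realType) (T : pseudoMetricType R)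
    (K B : set T) : compact K ->
  (exists2 U, open U & B = K `&` U) -> (exists2 V, closed V & B = K `&` V) ->
  exists2 e, 0 < e & forall x y, K x -> K y -> ball x e y -> B x -> B y.
Proof.
move=> Kc [U oU BU] [V cV BV].
have locally_const x : K x ->
    exists2 r, 0 < r & forall y, K y -> ball x r y -> (B y <-> B x).
  move=> Kx; have [Bx|nBx] := pselect (B x).
    have /nbhs_ballP[r r0 rU] : nbhs x U.
      by apply: open_nbhs_nbhs; split => //; move: Bx; rewrite BU => -[].
    by exists r => // y Ky xy; split => // _; rewrite BU; split => //; exact: rU.
  have /nbhs_ballP[r r0 rV] : nbhs x (~` V).
    apply: open_nbhs_nbhs; split; first exact: closed_openC.
    by move=> Cx; apply: nBx; rewrite BV.
  by exists r => // y Ky xy; split => // By; have := rV _ xy; rewrite BV in By; case: By.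
have cover : \forall e \near 0^'+, K `<=`
    (fun x => forall y, K y -> ball x e y -> B x -> B y).
  have ncw := (near_covering_withinP K).2 ((compact_near_coveringP K).1 Kc).
  apply: (ncw R _ (fun e x => forall y, K y -> ball x e y -> B x -> B y)) => x Kx.
  have [r r0 rB] := locally_const x Kx.
  near=> x' e => Kx' y Ky x'y Bx'.
  have xx' : ball x (r / 2) x' by near: x'; apply: nbhsx_ballx; rewrite divr_gt0.
  have xy : ball x r y.
    apply: (le_ball (e1 := r / 2 + e)); last exact: ball_triangle xx' x'y.
    have : e < r / 2 by near: e; apply: nbhs_right_lt; rewrite divr_gt0.
    lra.
  by apply/(rB y Ky xy)/(rB x' Kx' (le_ball _ xx')) => //; lra.
near (0 : R)^'+ => e.
exists e; first by near: e; exact: nbhs_right_gt.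
move=> x y Kx Ky; exact: (near cover e).
Unshelve. all: by end_near. Qed.

Definition graph_connected (I : eqType) (V : seq I) (E : I -> I -> Prop) :=
  forall U : I -> Prop, (exists2 u, u \in V & U u) ->
  (forall u v, u \in V -> v \in V -> U u -> E u v -> U v) ->
  forall u, u \in V -> U u.

Lemma graph_connected_sub (I : eqType) (V : seq I) (E E' : I -> I -> Prop) :
  (forall u v, u \in V -> v \in V -> E u v -> E' u v) ->
  graph_connected V E -> graph_connected V E'.
Proof.
move=> EE' G U U0 UE'; apply: G => // u v uV vV Uu Euv.
exact: UE' Uu (EE' _ _ uV vV Euv).
Qed.

Section PiecesGraph.
Variables (T : topologicalType) (I : choiceType) (V : seq I) (F : I -> set T).

Definition pieces_meet u v := F u `&` F v !=set0.

Let S := \bigcup_(u in [set` V]) F u.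

Lemma connected_pieces_graph : (forall u, u \in V -> closed (F u)) ->
  (forall u, u \in V -> F u !=set0) -> connected S ->
  graph_connected V pieces_meet.
Proof.
move=> cF neF cS U [u0 u0V Uu0] HU u1 u1V.
pose A (P : I -> Prop) := \bigcup_(u in [set u | u \in V /\ P u]) F u.
have cA P : closed (A P).
  apply: closed_bigcup => [|u [uV _]]; last exact: cF.
  by apply: sub_finite_set (finite_seq V) => u [].
have A_disj z u : u \in V -> A (fun v => ~ U v) z -> F u z -> ~ U u.
  by move=> uV [v [vV nUv] Fvz] Fuz Uu; apply: nUv (HU u v uV vV Uu _); exists z.
have sepA : separated (A U) (A (fun v => ~ U v)).
  rewrite /separated -!(closure_id _).1 //; split;
    by apply/disjoints_subset => z [u [uV Uu] Fuz] /(A_disj z u uV); apply.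
have SA : S `<=` A U `|` A (fun v => ~ U v).
  by move=> z [u uV Fuz]; have [Uu|nUu] := pselect (U u); [left|right]; exists u.
have [z0 Fz0] := neF _ u0V; have [z1 Fz1] := neF _ u1V.
case: (connected_subset sepA SA cS) => SA'.
  have [u [uV Uu] Fuz1] := SA' z1 (ltac:(by exists u1)).
  by apply: (HU u u1 uV u1V Uu); exists z1.
by exfalso; apply: (A_disj z0 u0 u0V) => //; apply: SA'; exists u0.
Qed.

Lemma pieces_graph_connected : (forall u, u \in V -> connected (F u)) ->
  graph_connected V pieces_meet -> connected S.
Proof.
move=> cF G; have [->|/set0P[x Sx]] := eqVneq S set0; first exact: connected0.
suff -> : S = connected_component S x by exact: component_connected.
apply/seteqP; split => [y [u uV Fuy]|]; last exact: connected_component_sub.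
have Fsub v : v \in V -> F v `<=` S by move=> vV z Fvz; exists v.
have [u0 u0V Fu0x] := Sx.
apply: (G (fun u => F u `<=` connected_component S x)) u uV y Fuy.
  by exists u0 => //; apply: connected_component_max => //; [exact: Fsub | exact: cF].
move=> v w vV wV Fv [z [Fvz Fwz]] t Fwt.
apply: (connected_component_trans (Fv z Fvz)).
exact: connected_component_max Fwz (Fsub w wV) (cF w wV) _ Fwt.
Qed.

End PiecesGraph.

Section UnitCube.
Variables (R : realType) (d : nat).

Lemma ball_rowE (x y : 'rV[R]_d) e :
  ball x e y <-> 0 < e /\ forall i, `|x ord0 i - y ord0 i| < e.
Proof.
split=> [[e0 xy]|[e0 xy]]; split=> //.
  by move=> i; move: (xy ord0 i); rewrite -ball_normE.
by move=> i j; rewrite (ord1 i) -ball_normE; exact: xy.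
Qed.

Lemma cube_ball (x y : 'rV[R]_d) e : unit_cube x -> unit_cube y -> 1 < e -> ball x e y.
Proof.
move=> x01 y01 e1; apply/ball_rowE; split=> [|i]; first lra.
have /andP[? ?] := x01 i; have /andP[? ?] := y01 i.
by apply: le_lt_trans e1; rewrite ler_norml; apply/andP; split; lra.
Qed.

Lemma unit_cube_compact : compact (@unit_cube R d).
Proof.
rewrite (_ : @unit_cube R d = [set v | forall i, `[0, 1]%classic (v ord0 i)]).
  exact: rV_compact (fun=> @segment_compact R 0 1).
by apply/seteqP; split=> x x01 i; have := x01 i; rewrite /= in_itv.
Qed.

Lemma unit_cube_closed : closed (@unit_cube R d).
Proof. by apply: compact_closed unit_cube_compact; exact: norm_hausdorff. Qed.

Lemma unit_cube_connected : connected (@unit_cube R d).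
Proof.
have -> : @unit_cube R d =
    \bigcup_(y in @unit_cube R d) ((fun t : R => t *: y) @` `[0, 1]%classic).
  apply/seteqP; split=> [y y01|y [z z01 [t]]].
    by exists y => //; exists 1; [rewrite /= in_itv /= ler01 lexx | rewrite scale1r].
  rewrite /= in_itv /= => /andP[t0 t1] <- i; rewrite mxE.
  by have /andP[z0 z1] := z01 i; rewrite mulr_ge0 ?mulr_ile1.
apply: bigcup_connected.
  by exists 0 => y _; exists 0; [rewrite /= in_itv /= lexx ler01 | rewrite scale0r].
move=> y _; apply: connected_continuous_connected; first exact: segment_connected.
apply: continuous_subspaceT; exact: scalel_continuous.
Qed.

End UnitCube.

Section Sponge.
Variables (R : realType) (d : nat) (N : 'I_d -> nat) (p : 'I_d -> nat -> R).
Hypothesis p_gt0 : forall i j, (j < N i)%N -> 0 < p i j.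
Hypothesis p_sum1 : forall i, \sum_(j < N i) p i j = 1.

Lemma bq0 i : bq p i 0 = 0.
Proof. by rewrite /bq big_ord0. Qed.

Lemma bqS i j : bq p i j.+1 = bq p i j + p i j.
Proof. by rewrite /bq big_ord_recr. Qed.

Lemma bq_last i j : j.+1 = N i -> bq p i j + p i j = 1.
Proof. by move=> jN; rewrite -bqS jN; exact: p_sum1. Qed.

Lemma bq_le i j k : (j <= k)%N -> (k <= N i)%N -> bq p i j <= bq p i k.
Proof.
move=> jk; elim: k jk => [|k IH]; first by rewrite leqn0 => /eqP ->.
rewrite leq_eqVlt => /orP[/eqP -> //|jk] kN.
by rewrite bqS; apply: le_trans (IH jk (ltnW kN)) _; rewrite lerDl ltW ?p_gt0.
Qed.

Lemma bq_lt i j k : (j < k)%N -> (k <= N i)%N -> bq p i j < bq p i k.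
Proof.
move=> jk kN; apply: lt_le_trans (bq_le jk kN).
by rewrite bqS ltrDl p_gt0 // (leq_trans jk kN).
Qed.

Lemma bq_ge0 i j : (j <= N i)%N -> 0 <= bq p i j.
Proof. by move=> jN; rewrite -(bq0 i) bq_le. Qed.

Lemma bq_le1 i j : (j <= N i)%N -> bq p i j <= 1.
Proof. by move=> jN; rewrite -(p_sum1 i) -/(bq p i (N i)) bq_le. Qed.

Lemma digit_coord_unit i a t : (a < N i)%N -> 0 <= t <= 1 ->
  0 <= p i a * t + bq p i a <= 1.
Proof.
move=> aN /andP[t0 t1]; have pa := p_gt0 aN.
have := bq_ge0 (ltnW aN); have := bq_le1 aN; rewrite bqS => q1 q0.
apply/andP; split; nra.
Qed.

Lemma digit_coord_eq0 i a t : (a < N i)%N -> 0 <= t <= 1 ->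
  p i a * t + bq p i a = 0 -> a = 0%N /\ t = 0.
Proof.
move=> aN /andP[t0 t1] E; have pa := p_gt0 aN; have q0 := bq_ge0 (ltnW aN).
have pt0 : p i a * t = 0 by nra.
split; last by move: pt0 => /eqP; rewrite mulf_eq0 gt_eqF //= => /eqP.
case: (posnP a) => // a0; have := bq_lt a0 (ltnW aN); rewrite bq0 => q_gt0; exfalso; lra.
Qed.

Lemma digit_coord_eq1 i a t : (a < N i)%N -> 0 <= t <= 1 ->
  p i a * t + bq p i a = 1 -> a.+1 = N i /\ t = 1.
Proof.
move=> aN /andP[t0 t1] E; have pa := p_gt0 aN.
have := bq_le1 aN; rewrite bqS => q1.
have pt1 : p i a * (1 - t) = 0 by nra.
split; last by move: pt1 => /eqP; rewrite mulf_eq0 gt_eqF //= subr_eq0 => /eqP.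
case: (ltngtP a.+1 (N i)) => // [aN'|]; last by rewrite ltnS leqNgt aN.
have := bq_lt aN' (leqnn _); rewrite bqS [bq p i (N i)]p_sum1 => q_lt1; exfalso; lra.
Qed.

Lemma digit_coord_eq_lt i a b x y : (a < b)%N -> (b < N i)%N ->
  0 <= x <= 1 -> 0 <= y <= 1 -> p i a * x + bq p i a = p i b * y + bq p i b ->
  [/\ a.+1 = b, x = 1 & y = 0].
Proof.
move=> ab bN /andP[x0 x1] /andP[y0 y1] E.
have pa := p_gt0 (ltn_trans ab bN); have pb := p_gt0 bN.
have := bq_le ab (ltnW bN); rewrite bqS => qab.
case: (ltngtP a.+1 b) => [ab'|ba|eb].
- have := bq_lt ab' (ltnW bN); rewrite bqS => q_lt; exfalso; nra.
- by rewrite ltnS leqNgt ab in ba.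
subst b; rewrite bqS in E.
have px : p i a * (1 - x) = 0 by nra.
have py : p i a.+1 * y = 0 by nra.
move: px py => /eqP; rewrite mulf_eq0 gt_eqF //= subr_eq0 => /eqP <-.
by move/eqP; rewrite mulf_eq0 gt_eqF //= => /eqP ->.
Qed.

Lemma digit_coord_eq i a b x y : (a < N i)%N -> (b < N i)%N ->
  0 <= x <= 1 -> 0 <= y <= 1 -> p i a * x + bq p i a = p i b * y + bq p i b ->
  [/\ a = b & x = y] \/ [/\ a.+1 = b, x = 1 & y = 0] \/ [/\ b.+1 = a, x = 0 & y = 1].
Proof.
move=> aN bN x01 y01 E; case: (ltngtP a b) => [ab|ba|eab].
- by right; left; exact: digit_coord_eq_lt ab bN x01 y01 E.
- right; right; have [? ? ?] := digit_coord_eq_lt ba aN y01 x01 (esym E); by split.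
- subst b; left; split => //; have pa := p_gt0 aN.
  have : p i a * (x - y) = 0 by lra.
  by move/eqP; rewrite mulf_eq0 gt_eqF //= subr_eq0 => /eqP.
Qed.

Hypothesis N_ge2 : forall i, (2 <= N i)%N.

Lemma p_lt1 i j : (j < N i)%N -> p i j < 1.
Proof.
move=> jN; case: (posnP j) => [->|j0].
  by have := bq_lt (ltnSn 1) (N_ge2 i); have := bq_le1 (N_ge2 i); rewrite !bqS bq0; lra.
by have := bq_lt j0 (ltnW jN); have := bq_le1 jN; rewrite bqS bq0; lra.
Qed.

(* The seed [2^-1] only keeps the ratio positive; the p i j are the real data. *)
Definition contraction_ratio : R :=
  \big[Num.max/2^-1]_(i < d) \big[Num.max/2^-1]_(j < N i) p i j.

Lemma contraction_ratio_lt1 : contraction_ratio < 1.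
Proof.
have half_lt1 : (2^-1 : R) < 1 by rewrite invf_lt1 ?ltr1n.
by apply: bigmax_lt => // i _; apply: bigmax_lt => // j _; exact: p_lt1.
Qed.

Lemma contraction_ratio_gt0 : 0 < contraction_ratio.
Proof. by apply: lt_le_trans (bigmax_ge_id _ _ _ _); rewrite invr_gt0. Qed.

Lemma contraction_ratio01 : 0 <= contraction_ratio < 1.
Proof. by rewrite ltW ?contraction_ratio_gt0 ?contraction_ratio_lt1. Qed.

Lemma p_le_contraction_ratio i j : (j < N i)%N -> p i j <= contraction_ratio.
Proof.
move=> jN; apply/bigmax_geP; right; exists i => //.
by apply/bigmax_geP; right; exists (Ordinal jN).
Qed.

Definition admissible (w : {ffun 'I_d -> nat}) := forall i, (w i < N i)%N.

Lemma bpsiE w x i : bpsi p w x ord0 i = p i (w i) * x ord0 i + bq p i (w i).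
Proof. by rewrite mxE. Qed.

Lemma bpsi_cube w x : admissible w -> unit_cube x -> unit_cube (bpsi p w x).
Proof. by move=> wN x01 i; rewrite bpsiE digit_coord_unit. Qed.

Lemma bpsi_ball w x y e : admissible w -> ball x e y ->
  ball (bpsi p w x) (contraction_ratio * e) (bpsi p w y).
Proof.
move=> wN /ball_rowE[e0 xy]; apply/ball_rowE.
split=> [|i]; first by rewrite mulr_gt0 ?contraction_ratio_gt0.
rewrite !bpsiE opprD addrACA subrr addr0 -mulrBr normrM gtr0_norm ?p_gt0 //.
apply: le_lt_trans (_ : contraction_ratio * `|x ord0 i - y ord0 i| < _).
  by rewrite ler_wpM2r ?p_le_contraction_ratio.
by rewrite ltr_pM2l ?contraction_ratio_gt0.
Qed.

Lemma bpsi_continuous w : admissible w -> continuous (bpsi p w).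
Proof.
move=> wN x A /nbhs_ballP[e e0 eA]; apply/nbhs_ballP; exists e => // y xy.
apply: eA; apply: le_ball (bpsi_ball wN xy).
by rewrite ger_pMl // ltW // contraction_ratio_lt1.
Qed.

Definition fixpt (w : {ffun 'I_d -> nat}) : 'rV[R]_d :=
  \row_i (bq p i (w i) / (1 - p i (w i))).

Lemma bpsi_fixpt w : admissible w -> bpsi p w (fixpt w) = fixpt w.
Proof.
move=> wN; apply/rowP => i; rewrite bpsiE !mxE; field.
by rewrite subr_eq0 eq_sym lt_eqF // p_lt1.
Qed.

Lemma fixpt_cube w : admissible w -> unit_cube (fixpt w).
Proof.
move=> wN i; rewrite mxE; have := p_lt1 (wN i); have := p_gt0 (wN i).
have := bq_ge0 (ltnW (wN i)); have := bq_le1 (wN i); rewrite bqS => q1 q0 pw0 pw1.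
apply/andP; split; first by rewrite divr_ge0 // subr_ge0 ltW.
by rewrite ler_pdivrMr ?subr_gt0 // mul1r lerBrDr.
Qed.

Definition face (al : 'I_d -> option bool) (x : 'rV[R]_d) :=
  forall i, if al i is Some b then x ord0 i = (if b then 1 else 0) else True.

Definition face_digits (al : 'I_d -> option bool) (w : {ffun 'I_d -> nat}) :=
  forall i, if al i is Some b then (if b then (w i).+1 = N i else w i = 0%N) else True.

Definition agree_free (al : 'I_d -> option bool) (x y : 'rV[R]_d) :=
  forall i, al i = None -> x ord0 i = y ord0 i.

Definition adjacent_free (al : 'I_d -> option bool) (a b : {ffun 'I_d -> nat}) :=
  forall i, al i = None -> [\/ a i = b i, (a i).+1 = b i | (b i).+1 = a i].

Definition same_free (al be : 'I_d -> option bool) :=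
  forall i, (al i == None) = (be i == None).

(* Where the digits of [a] and [b] differ in a free coordinate, a contact point
   of psi_a(x) and psi_b(y) forces [x] onto the side of the cube facing [b]. *)
Definition refine (al : 'I_d -> option bool) (a b : {ffun 'I_d -> nat}) i :=
  if al i is Some s then Some s else if a i == b i then None else Some (a i < b i)%N.

Definition nfree (al : 'I_d -> option bool) := #|[set i | al i == None]%SET|.

Definition all_free : 'I_d -> option bool := fun=> None.

Lemma nfree_all_free : nfree all_free = d.
Proof.
by rewrite /nfree -[RHS]card_ord -cardsT; congr #|_|; apply/setP => j; rewrite !inE.
Qed.

Lemma agree_free_sym al be x y : same_free al be -> agree_free al x y -> agree_free be y x.
Proof. by move=> sf xy i bei; apply/esym/xy/eqP; rewrite sf bei. Qed.

Lemma same_free_refine al be a b : same_free al be ->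
  same_free (refine al a b) (refine be b a).
Proof.
move=> sf i; have := sf i; rewrite /refine [b i == a i]eq_sym.
by case: (al i) => [?|]; case: (be i) => [?|] //= _; case: (a i == b i).
Qed.

Lemma nfree_refine al (a b : {ffun 'I_d -> nat}) i : al i = None -> a i != b i ->
  (nfree (refine al a b) < nfree al)%N.
Proof.
move=> ali ab; apply/proper_card/properP; split.
  by apply/fintype.subsetP => j; rewrite !inE /refine; case: (al j).
by exists i; rewrite !inE /refine ali ?(negbTE ab).
Qed.

Lemma face_refine al a b x : face (refine al a b) x -> face al x.
Proof. by move=> f i; move: (f i); rewrite /refine; case: (al i). Qed.

Lemma fixpt_face al w : admissible w -> face_digits al w -> face al (fixpt w).
Proof.
move=> wN dw i; move: (dw i); rewrite mxE; case: (al i) => // [[]] wi.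
  have -> : bq p i (w i) = 1 - p i (w i) by rewrite -(bq_last wi) addrK.
  by rewrite divff // subr_eq0 eq_sym lt_eqF // p_lt1.
by rewrite wi bq0 mul0r.
Qed.

Lemma bpsi_face al w x : face_digits al w -> face al x -> face al (bpsi p w x).
Proof.
move=> dw fx i; rewrite bpsiE; move: (dw i) (fx i).
case: (al i) => // [[]] wi ->; first by rewrite mulr1 addrC bq_last.
by rewrite wi mulr0 bq0 addr0.
Qed.

Lemma bpsi_face_inv al w x : admissible w -> unit_cube x ->
  face al (bpsi p w x) -> face_digits al w /\ face al x.
Proof.
move=> wN x01 f; apply: all_and2 => i; move: (f i); rewrite bpsiE.
case: (al i) => // [[]] E.
  by have [] := digit_coord_eq1 (wN i) (x01 i) E.
by have [] := digit_coord_eq0 (wN i) (x01 i) E.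
Qed.

Section Refinement.
Variables (al : 'I_d -> option bool) (a b : {ffun 'I_d -> nat}) (x y : 'rV[R]_d).
Hypotheses (aN : admissible a) (bN : admissible b).
Hypotheses (x01 : unit_cube x) (y01 : unit_cube y).
Hypothesis xy : agree_free al (bpsi p a x) (bpsi p b y).

Let coord_eq i : al i = None ->
  [/\ a i = b i & x ord0 i = y ord0 i] \/
  [/\ (a i).+1 = b i, x ord0 i = 1 & y ord0 i = 0] \/
  [/\ (b i).+1 = a i, x ord0 i = 0 & y ord0 i = 1].
Proof. by move=> /xy; rewrite !bpsiE; apply: digit_coord_eq. Qed.

Lemma refine_face_inv : face al (bpsi p a x) -> face (refine al a b) x.
Proof.
move=> /(bpsi_face_inv aN x01)[_ fx] i; rewrite /refine.
case ali: (al i) => [s|]; first by move: (fx i); rewrite ali.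
case: (coord_eq ali) => [[-> _]|[[<- -> _]|[<- -> _]]]; first by rewrite eqxx.
  by rewrite (ltn_eqF (ltnSn _)) ltnSn.
by rewrite (gtn_eqF (ltnSn _)) ltnNge leqnSn.
Qed.

Lemma refine_agree_inv : adjacent_free al a b /\ agree_free (refine al a b) x y.
Proof.
split=> i; first by move=> ali; case: (coord_eq ali) => [[]|[[]|[]]]; constructor.
rewrite /refine; case ali: (al i) => [//|].
case: (coord_eq ali) => [[-> ->]|[[<- _ _]|[<- _ _]]] //.
  by rewrite (ltn_eqF (ltnSn _)).
by rewrite (gtn_eqF (ltnSn _)).
Qed.

End Refinement.

Lemma bpsi_agree al be a b x y : same_free al be -> adjacent_free al a b ->
  face (refine al a b) x -> face (refine be b a) y ->
  agree_free (refine al a b) x y -> agree_free al (bpsi p a x) (bpsi p b y).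
Proof.
move=> sf ab fx fy xy i ali; rewrite !bpsiE.
have bei : be i = None by apply/eqP; rewrite -sf ali.
move: (fx i) (fy i) (xy i); rewrite /refine ali bei.
case: (ab i ali) => [->|<-|<-]; first by rewrite eqxx => _ _ /(_ erefl) ->.
  rewrite (ltn_eqF (ltnSn _)) (gtn_eqF (ltnSn _)) ltnSn ltnNge leqnSn /= => -> -> _.
  by rewrite mulr1 mulr0 add0r bqS addrC.
rewrite (ltn_eqF (ltnSn _)) (gtn_eqF (ltnSn _)) ltnSn ltnNge leqnSn /= => -> -> _.
by rewrite mulr1 mulr0 add0r bqS addrC.
Qed.

Variable D : seq {ffun 'I_d -> nat}.
Hypothesis D_admissible : forall w, w \in D -> admissible w.

Lemma bQ_cube n : bQ p D n `<=` @unit_cube R d.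
Proof.
elim: n => [|n IH] x //= [w wD [y Qy <-]].
exact: bpsi_cube (D_admissible wD) (IH y Qy).
Qed.

Lemma bQ_compact n : compact (bQ p D n).
Proof.
elim: n => [|n IH]; first exact: unit_cube_compact.
rewrite /= bigcup_seq big_seq; apply: bigsetU_compact => w wD.
apply: continuous_compact IH; apply: continuous_subspaceT.
exact: bpsi_continuous (D_admissible wD).
Qed.

Variable K : set 'rV[R]_d.
Hypothesis K_compact : compact K.
Hypothesis K_nonempty : K !=set0.
Hypothesis K_fixed : K = \bigcup_(w in [set` D]) (bpsi p w @` K).

Lemma K_bpsi w x : w \in D -> K x -> K (bpsi p w x).
Proof. by move=> wD Kx; rewrite K_fixed; exists w => //; exists x. Qed.

Lemma K_decomp x : K x -> exists w y, [/\ w \in D, K y & bpsi p w y = x].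
Proof. by rewrite {1}K_fixed => -[w wD [y Ky <-]]; exists w, y. Qed.

Lemma K_closed : closed K.
Proof. by apply: compact_closed K_compact; exact: norm_hausdorff. Qed.

Lemma K_near_cube M n x : (forall y, K y -> ball 0 M y) -> K x ->
  exists2 z, unit_cube z & ball x (contraction_ratio ^+ n * M) z.
Proof.
move=> KM; elim: n x => [|n IH] x Kx.
  exists 0; first by move=> i; rewrite mxE lexx ler01.
  by rewrite expr0 mul1r; apply: ball_sym; exact: KM.
have [w [y [wD Ky <-]]] := K_decomp Kx; have [z z01 yz] := IH y Ky.
exists (bpsi p w z); first exact: bpsi_cube (D_admissible wD) z01.
by rewrite exprS -mulrA; exact: bpsi_ball (D_admissible wD) yz.
Qed.

Lemma K_bounded : exists2 M, 0 < M & forall y, K y -> ball 0 M y.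
Proof.
have [M [Mreal KM]] := compact_bounded K_compact.
exists (`|M| + 2) => [|y Ky]; first by have := normr_ge0 M; lra.
rewrite -ball_normE /= sub0r normrN.
have M_lt : M < `|M| + 1 by have := real_ler_norm Mreal; lra.
by apply: le_lt_trans (KM _ M_lt y Ky) _; rewrite ltrD2l ltr1n.
Qed.

Lemma K_cube : K `<=` @unit_cube R d.
Proof.
have [M M0 KM] := K_bounded; move=> x Kx.
apply: (closed_geometric_approx (unit_cube_closed (R := R) (d := d))
  contraction_ratio01 M0) => n.
exact: K_near_cube KM Kx.
Qed.

Lemma K_bQ n : K `<=` bQ p D n.
Proof.
elim: n => [|n IH]; first exact: K_cube.
by move=> x /K_decomp[w [y [wD Ky <-]]]; exists w => //; exists y => //; exact: IH.
Qed.

Lemma K_fixpt w : w \in D -> K (fixpt w).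
Proof.
move=> wD; have wN := D_admissible wD; have [k Kk] := K_nonempty.
apply: (closed_geometric_approx K_closed contraction_ratio01 (ltr0n _ 2)) => n.
exists (iter n (bpsi p w) k); first by elim: n => //= n Kn; exact: K_bpsi.
elim: n => [|n IH].
  by rewrite expr0 mul1r; apply: cube_ball; [exact: fixpt_cube | exact: K_cube | lra].
by rewrite exprS -mulrA iterS -(bpsi_fixpt wN); exact: bpsi_ball.
Qed.

Definition faces_meet (X : set 'rV[R]_d) al be :=
  exists x y, [/\ X x, X y, face al x, face be y & agree_free al x y].

Lemma faces_meet_fixpt al be a b : a \in D -> b \in D ->
  face_digits al a -> face_digits be b -> (forall i, al i = None -> a i = b i) ->
  faces_meet K al be.
Proof.
move=> aD bD da db ab; have aN := D_admissible aD; have bN := D_admissible bD.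
exists (fixpt a), (fixpt b); split; [exact: K_fixpt | exact: K_fixpt |
  exact: fixpt_face | exact: fixpt_face |].
by move=> i /ab abi; rewrite !mxE abi.
Qed.

Lemma faces_meet_bQ_K n al be : same_free al be -> (nfree al < n)%N ->
  faces_meet (bQ p D n) al be -> faces_meet K al be.
Proof.
elim: n al be => [|n IH] al be sf; first by rewrite ltn0.
move=> nfree_lt.
move=> [_ [_ [[a aD [x Qx <-]] [b bD [y Qy <-]] fx fy xy]]].
have aN := D_admissible aD; have bN := D_admissible bD.
have x01 := bQ_cube Qx; have y01 := bQ_cube Qy.
have [da _] := bpsi_face_inv aN x01 fx; have [db _] := bpsi_face_inv bN y01 fy.
have [[i ali ab]|same] := pselect (exists2 i, al i = None & a i != b i); last first.
  apply: (faces_meet_fixpt aD bD da db) => i ali.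
  by apply/eqP/negPn/negP => ab; apply: same; exists i.
have yx := agree_free_sym sf xy.
have [ab_adj _] := refine_agree_inv aN bN x01 y01 xy.
have [x' [y' [Kx' Ky' fx' fy' xy']]] : faces_meet K (refine al a b) (refine be b a).
  apply: IH; first exact: same_free_refine.
    by apply: leq_trans (nfree_refine ali ab) _; rewrite -ltnS.
  exists x, y; split => //.
  - exact: refine_face_inv aN bN x01 y01 xy fx.
  - exact: refine_face_inv bN aN y01 x01 yx fy.
  - exact: (refine_agree_inv aN bN x01 y01 xy).2.
exists (bpsi p a x'), (bpsi p b y'); split; [exact: K_bpsi | exact: K_bpsi | | |].
- exact: bpsi_face da (face_refine fx').
- exact: bpsi_face db (face_refine fy').
- exact: bpsi_agree sf ab_adj fx' fy' xy'.
Qed.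

Definition pieces (X : set 'rV[R]_d) w := bpsi p w @` X.

Lemma pieces_closed X w : compact X -> w \in D -> closed (pieces X w).
Proof.
move=> Xc wD; apply: compact_closed; first exact: norm_hausdorff.
apply: continuous_compact Xc; apply: continuous_subspaceT.
exact: bpsi_continuous (D_admissible wD).
Qed.

Lemma pieces_meet_bQ_K u v : u \in D -> v \in D ->
  pieces_meet (pieces (bQ p D d)) u v -> pieces_meet (pieces K) u v.
Proof.
move=> uD vD [_ [[x Qx <-] [y Qy xy]]].
have [<-|uv] := eqVneq u v.
  by have [k Kk] := K_nonempty; exists (bpsi p u k); split; exists k.
have [i ui] : exists i, u i != v i.
  apply: contrapT => nuv; move/eqP: uv; apply; apply/ffunP => j.
  by apply/eqP/negPn/negP => uvj; apply: nuv; exists j.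
have sf : same_free all_free all_free by [].
have xy' : agree_free all_free (bpsi p u x) (bpsi p v y) by move=> j _; rewrite xy.
have uN := D_admissible uD; have vN := D_admissible vD.
have x01 := bQ_cube Qx; have y01 := bQ_cube Qy.
have [x' [y' [Kx' Ky' fx' fy' xy'']]] :
    faces_meet K (refine all_free u v) (refine all_free v u).
  apply: (faces_meet_bQ_K (n := d) (same_free_refine u v sf)).
    by rewrite -nfree_all_free; exact: nfree_refine (erefl : all_free i = None) ui.
  exists x, y; split => //.
  - exact: refine_face_inv uN vN x01 y01 xy' (fun=> I).
  - exact: refine_face_inv vN uN y01 x01 (agree_free_sym sf xy') (fun=> I).
  - exact: (refine_agree_inv uN vN x01 y01 xy').2.
have [uv_adj _] := refine_agree_inv uN vN x01 y01 xy'.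
have e := bpsi_agree sf uv_adj fx' fy' xy''.
exists (bpsi p u x'); split; first by exists x'.
by exists y' => //; apply/rowP => j; rewrite (e j).
Qed.

Section HataCriterion.
Hypothesis K_graph_connected : graph_connected D (pieces_meet (pieces K)).

(* Pulling [B] back through psi_u divides the saturation radius by the ratio;
   the pieces graph then carries [B] from one piece to all of them. *)
Lemma saturated_full n B e : B `<=` K ->
  (forall x y, K x -> K y -> ball x e y -> B x -> B y) ->
  contraction_ratio ^+ n < e -> B !=set0 -> K `<=` B.
Proof.
elim: n B e => [|n IH] B e BK Bsat n_lt [x0 Bx0] x Kx.
  apply: (Bsat x0 x (BK _ Bx0) Kx _ Bx0).
  apply: cube_ball; [exact: K_cube (BK _ Bx0) | exact: K_cube |].
  by rewrite -(expr0 contraction_ratio).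
have c0 := contraction_ratio_gt0.
have pull_full u : u \in D -> (exists2 y, K y & B (bpsi p u y)) ->
    forall y, K y -> B (bpsi p u y).
  move=> uD [y0 Ky0 By0] y Ky.
  suff : [set y | K y /\ B (bpsi p u y)] y by case.
  apply: (IH _ (e / contraction_ratio)).
  - by move=> ? [].
  - move=> y1 y2 Ky1 Ky2 y12 [_ By1]; split => //.
    apply: (Bsat _ _ (K_bpsi uD Ky1) (K_bpsi uD Ky2) _ By1).
    have -> : e = contraction_ratio * (e / contraction_ratio).
      by rewrite mulrC divfK // gt_eqF.
    exact: bpsi_ball (D_admissible uD) y12.
  - by rewrite ltr_pdivlMr // -exprSr.
  - by exists y0.
  - exact: Ky.
have [w [x' [wD Kx' <-]]] := K_decomp Kx.
apply: (@K_graph_connected (fun u => forall y, K y -> B (bpsi p u y)) _ _ w wD x' Kx').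
  have [w0 [y0 [w0D Ky0 ey0]]] := K_decomp (BK _ Bx0).
  by exists w0 => //; apply: pull_full => //; exists y0; rewrite ?ey0.
move=> u v uD vD Bu [z [[k Kk ek] [k' Kk' ek']]].
by apply: pull_full => //; exists k'; rewrite // ek' -ek; exact: Bu.
Qed.

Lemma hata_connected : connected K.
Proof.
move=> B B0 BU BV.
have BK : B `<=` K by case: BU => U _ -> x [].
have [e e0 Bsat] := clopen_uniformly_constant K_compact BU BV.
have [n n_lt] := exists_expr_lt contraction_ratio01 e0.
by apply/seteqP; split=> //; exact: saturated_full Bsat n_lt B0.
Qed.

Lemma bQ_connected n : connected (bQ p D n).
Proof.
elim: n => [|n IH]; first exact: unit_cube_connected.
apply: pieces_graph_connected => [w wD|].
  apply: (connected_continuous_connected IH); apply: continuous_subspaceT.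
  exact: bpsi_continuous (D_admissible wD).
apply: graph_connected_sub K_graph_connected => u v _ _ [z [[k Kk <-] [k' Kk' e]]].
by exists (bpsi p u k); split; [exists k | exists k'] => //; exact: K_bQ.
Qed.

End HataCriterion.

Lemma connected_K_bQ : connected K <-> connected (bQ p D d.+1).
Proof.
split=> [cK|cQ].
  apply: bQ_connected; apply: (connected_pieces_graph (F := pieces K)).
  - by move=> w wD; exact: pieces_closed.
  - by move=> w _; have [k Kk] := K_nonempty; exists (bpsi p w k), k.
  - by rewrite -K_fixed.
apply: hata_connected; apply: graph_connected_sub pieces_meet_bQ_K _.
apply: (connected_pieces_graph (F := pieces (bQ p D d))) cQ => [w wD|w _].
  exact: pieces_closed (bQ_compact (n := d)) wD.
by have [k Kk] := K_nonempty; exists (bpsi p w k), k => //; exact: K_bQ.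
Qed.

End Sponge.

Theorem mainTheorem5 (R : realType) (d : nat) (N : 'I_d -> nat)
  (p : 'I_d -> nat -> R) (D : seq {ffun 'I_d -> nat}) (K : set 'rV[R]_d) :
  (2 <= d)%N ->
  (forall i, 2 <= N i)%N ->
  (forall i j, (j < N i)%N -> 0 < p i j) ->
  (forall i, \sum_(j < N i) p i j = 1) ->
  uniq D ->
  (forall w, w \in D -> forall i, (w i < N i)%N) ->
  (1 < size D)%N -> (size D < \prod_(i < d) N i)%N ->
  compact K -> K !=set0 ->
  K = \bigcup_(w in [set` D]) (bpsi p w @` K) ->
  (connected K <-> connected (bQ p D d.+1)).
Proof.
move=> _ N_ge2 p_gt0 p_sum1 _ D_adm _ _ Kc K0 Kfix.
exact (connected_K_bQ p_gt0 p_sum1 N_ge2 D_adm Kc K0 Kfix).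
Qed.
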